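(* $\mathrm{H}^1(\mathcal{W},\mathcal{W}\wedge\mathcal{W})=0$, where $\mathcal{W}$ acts on $\mathcal{W}\wedge\mathcal{W}$ via the adjoint action. In particular, every Lie bialgebra structure on $\mathcal{W}$ is coboundary.
   Context: The Witt algebra $\mathcal{W}$ has basis $\{L_n\mid n\in\mathbb{Z}\}$ and bracket $[L_m,L_n]=(m-n)L_{m+n}$. For a Lie algebra $L$ and $L$-module $M$, $\mathrm{H}^1(L,M)$ is the quotient of 1-cocycles (linear $d$ with $d([x,y])=x\cdot d(y)-y\cdot d(x)$) by 1-coboundaries ($x\mapsto x\cdot v$). A Lie bialgebra $(L,\delta)$ is a Lie algebra with a cobracket $\delta:L\to L\wedge L$ satisfying the co-Jacobi identity and being a 1-cocycle with values in $L\wedge L$; it is coboundary if $\delta$ is a 1-coboundary. *)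

From HB Require Import structures.
From mathcomp Require Import all_boot all_order all_algebra.
Set Implicit Arguments. Unset Strict Implicit. Unset Printing Implicit Defensive.
Import Order.TTheory GRing.Theory Num.Theory.
Local Open Scope ring_scope.

(* Coordinate model of the Witt algebra W over a field F: basis (L_n)_{n : int},
   [L_m, L_n] = (m - n) L_{m+n}.

   An element of W /\ W is encoded by its (antisymmetric, finitely supported)
   coefficient function c : int -> int -> F, representing the tensor
   sum_{i,j} c i j  L_i (x) L_j  = sum_{i<j} c i j  L_i /\ L_j. *)
Definition wedge_elt (F : fieldType) (c : int -> int -> F) : Prop :=
  (forall a b, c a b = - c b a) /\
  exists N : nat, forall a b, (N < absz a)%N \/ (N < absz b)%N -> c a b = 0.

(* Adjoint action of L_m on W /\ W:
   L_m . (L_i (x) L_j) = (m - i) L_{m+i} (x) L_j + (m - j) L_i (x) L_{m+j},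
   so the coefficient of L_a (x) L_b in L_m . c is the following. *)
Definition wact (F : fieldType) (m : int) (c : int -> int -> F) : int -> int -> F :=
  fun a b => (2 * m - a)%:~R * c (a - m) b + (2 * m - b)%:~R * c a (b - m).

(* A linear map d : W -> W /\ W is determined by the images d n := d(L_n),
   which may be chosen arbitrarily in W /\ W.  By bilinearity, the 1-cocycle
   identity d([x,y]) = x.d(y) - y.d(x) holds iff it holds on basis elements. *)
Definition witt_cocycle (F : fieldType) (d : int -> int -> int -> F) : Prop :=
  (forall n, wedge_elt (d n)) /\
  forall m n a b,
    (m - n)%:~R * d (m + n) a b = wact m (d n) a b - wact n (d m) a b.

Definition witt_coboundary (F : fieldType) (d : int -> int -> int -> F) : Prop :=
  exists v, wedge_elt v /\ forall n a b, d n a b = wact n v a b.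

From HB Require Import structures.
From mathcomp Require Import all_boot all_order all_algebra.
From mathcomp Require Import ring zify.
Import Order.TTheory GRing.Theory Num.Theory.
Local Open Scope ring_scope.

(* Subtract coboundaries from a cocycle d until it vanishes.  Antisymmetry and
   the cocycle identity for [L_0, L_-a] kill the weight-0 part of d(L_0), and L_0
   acts on L_a /\ L_b by -(a + b), so d(L_0) is a coboundary L_0 . v; afterwards
   the identity for [L_0, L_n] makes every d(L_n) homogeneous of weight n.  The
   weight-1 element d(L_1) is then L_1 . w for a weight-0 element
   w = sum_a W(a) L_a (x) L_-a, where W solves a first-order recurrence; w has
   finite support because the identity for [L_1, L_-2] forces W to vanish
   eventually.  Once d(L_0) = d(L_1) = 0, the identities for [L_1, L_-1],
   [L_1, L_-2] and [L_2, L_-1] are first-order recurrences in a for the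
   coefficients of d(L_-1), d(L_-2), d(L_2); antisymmetry and finite support give
   them a zero, and their nonvanishing leading coefficients propagate it.  As
   L_1, L_-1, L_2, L_-2 generate the Witt algebra, d = 0. *)

Section WittCocycles.
Context {F : fieldType} (charF : [pchar F] =i pred0).
Implicit Types (d e : int -> int -> int -> F) (c v w : int -> int -> F).

Lemma pchar0_intr_eq0 (k : int) : ((k%:~R : F) == 0) = (k == 0).
Proof.
have natr_eq0 := (pcharf0P F).1 charF.
by case: k => n; rewrite ?NegzE ?intrN ?oppr_eq0 -?pmulrn natr_eq0 //; lia.
Qed.

Lemma mulIintr_eq0 {k : int} {x : F} : k != 0 -> k%:~R * x = 0 -> x = 0.
Proof.
by move=> k_neq0 /eqP; rewrite mulf_eq0 pchar0_intr_eq0 (negPf k_neq0) => /eqP.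
Qed.

Lemma eq0_of_eq {x y g : F} : x = y -> g = x - y -> g = 0.
Proof. by move=> -> ->; rewrite subrr. Qed.

Lemma lincomb3_eq0 (c1 c2 c3 : F) {x1 x2 x3 g : F} : x1 = 0 -> x2 = 0 -> x3 = 0 ->
  g = c1 * x1 + c2 * x2 + c3 * x3 -> g = 0.
Proof. by move=> -> -> -> ->; ring. Qed.

Lemma recurrence_up (f : int -> F) (c1 c2 : int -> int) a0 :
  (forall a, a0 < a -> (c1 a)%:~R * f (a - 1) + (c2 a)%:~R * f a = 0) ->
  (forall a, a0 < a -> c2 a != 0) -> f a0 = 0 ->
  forall a, a0 <= a -> f a = 0.
Proof.
move=> rec c2_neq0 f_a0.
have up k : f (a0 + k%:Z) = 0.
  elim: k => [|k IH]; first by rewrite addr0.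
  have ha : a0 < a0 + k.+1%:Z by lia.
  apply: (mulIintr_eq0 (c2_neq0 _ ha)); apply: (eq0_of_eq (rec _ ha)).
  by rewrite (_ : a0 + k.+1%:Z - 1 = a0 + k%:Z) ?IH; [ring | lia].
by move=> a ha; rewrite (_ : a = a0 + (absz (a - a0))%:Z) ?up //; lia.
Qed.

Lemma recurrence_down (f : int -> F) (c1 c2 : int -> int) lo a0 :
  (forall a, lo < a <= a0 -> (c1 a)%:~R * f (a - 1) + (c2 a)%:~R * f a = 0) ->
  (forall a, lo < a <= a0 -> c1 a != 0) -> f a0 = 0 ->
  forall a, lo <= a <= a0 -> f a = 0.
Proof.
move=> rec c1_neq0 f_a0.
have down k : k%:Z <= a0 - lo -> f (a0 - k%:Z) = 0.
  elim: k => [|k IH] hk; first by rewrite subr0.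
  have ha : lo < a0 - k%:Z <= a0 by lia.
  apply: (mulIintr_eq0 (c1_neq0 _ ha)); apply: (eq0_of_eq (rec _ ha)).
  by rewrite (_ : a0 - k%:Z - 1 = a0 - k.+1%:Z) ?IH; [ring | lia | lia].
by move=> a ha; rewrite (_ : a = a0 - (absz (a0 - a))%:Z) ?down //; lia.
Qed.

Lemma recurrence_eq0 (f : int -> F) (c1 c2 : int -> int) a0 :
  (forall a, (c1 a)%:~R * f (a - 1) + (c2 a)%:~R * f a = 0) ->
  (forall a, a <= a0 -> c1 a != 0) -> (forall a, a0 < a -> c2 a != 0) ->
  f a0 = 0 -> forall a, f a = 0.
Proof.
move=> rec c1_neq0 c2_neq0 f_a0 a; have [a_le|a_gt] := lerP a a0.
  apply: (@recurrence_down f c1 c2 a a0) => //; last by rewrite lexx.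
  by move=> b /andP[_ hb]; exact: c1_neq0.
by apply: (@recurrence_up f c1 c2 a0) => //; exact: ltW.
Qed.

Definition cocycle_law (e : int -> int -> int -> F) : Prop := forall m n a b,
  (m - n)%:~R * e (m + n) a b = wact m (e n) a b - wact n (e m) a b.

Definition sub_coboundary (e : int -> int -> int -> F) (v : int -> int -> F) :
  int -> int -> int -> F := fun n a b => e n a b - wact n v a b.

Lemma wactD m v w a b :
  wact m (fun a b => v a b + w a b) a b = wact m v a b + wact m w a b.
Proof. rewrite /wact; ring. Qed.

Lemma wactN m v a b :
  wact m (fun a b => - v a b) a b = - wact m v a b.
Proof. rewrite /wact; ring. Qed.

Lemma wact_cocycle_law v : cocycle_law (fun n => wact n v).
Proof.
move=> m n a b; rewrite /wact.
have -> : a - m - n = a - (m + n) by ring.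
have -> : a - n - m = a - (m + n) by ring.
have -> : b - m - n = b - (m + n) by ring.
have -> : b - n - m = b - (m + n) by ring.
ring.
Qed.

Lemma cocycle_law_sub e v : cocycle_law e -> cocycle_law (sub_coboundary e v).
Proof.
move=> e_law m n a b; rewrite /sub_coboundary wactD wactD !wactN.
rewrite mulrBr e_law (wact_cocycle_law v m n a b); ring.
Qed.

Lemma wedge_eltD v w :
  wedge_elt v -> wedge_elt w -> wedge_elt (fun a b => v a b + w a b).
Proof.
move=> [v_anti [N vN]] [w_anti [M wM]]; split.
  by move=> a b; rewrite v_anti w_anti opprD.
by exists (maxn N M) => a b hab; rewrite vN ?wM ?addr0 //; lia.
Qed.

Lemma wedge_eltN v :
  wedge_elt v -> wedge_elt (fun a b => - v a b).
Proof.
move=> [v_anti [N vN]]; split; first by move=> a b; rewrite v_anti.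
by exists N => a b hab; rewrite vN ?oppr0.
Qed.

Lemma wedge_elt_wact m v : wedge_elt v -> wedge_elt (wact m v).
Proof.
move=> [v_anti [N vN]]; split.
  by move=> a b; rewrite /wact v_anti (v_anti (b - m)); ring.
exists (N + absz m)%N => a b hab.
by rewrite /wact !vN ?mulr0 ?addr0 //; lia.
Qed.

Lemma witt_cocycle_sub e v :
  witt_cocycle e -> wedge_elt v -> witt_cocycle (sub_coboundary e v).
Proof.
move=> [e_wedge e_law] v_wedge; split; last exact: cocycle_law_sub.
by move=> n; apply: wedge_eltD => //; apply/wedge_eltN/wedge_elt_wact.
Qed.

Lemma witt_coboundary_sub {e v} :
  wedge_elt v -> witt_coboundary (sub_coboundary e v) -> witt_coboundary e.
Proof.
move=> v_wedge [w [w_wedge ew]].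
exists (fun a b => v a b + w a b); split; first exact: wedge_eltD.
by move=> n a b; rewrite wactD -ew /sub_coboundary; ring.
Qed.

Lemma witt_coboundary0 e : (forall n a b, e n a b = 0) -> witt_coboundary e.
Proof.
move=> e_eq0; exists (fun _ _ => 0); split.
  by split=> [a b|]; [rewrite oppr0 | exists 0%N].
by move=> n a b; rewrite e_eq0 /wact !mulr0 addr0.
Qed.

Lemma cocycle_law_homogeneous e : cocycle_law e -> (forall a b, e 0 a b = 0) ->
  forall n a b, a + b != n -> e n a b = 0.
Proof.
move=> e_law e0 n a b hn.
apply: (@mulIintr_eq0 (a + b - n)); first by rewrite subr_eq0.
apply: (eq0_of_eq (e_law 0 n a b)); rewrite /wact !e0 !subr0 (add0r n); ring.
Qed.

Lemma antisym_diag c : (forall a b, c a b = - c b a) ->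
  forall a, c a a = 0.
Proof.
by move=> c_anti a; apply: (@mulIintr_eq0 2) => //; apply: (eq0_of_eq (c_anti a a)); ring.
Qed.

Lemma cocycle_law_deg0_antidiag e : cocycle_law e ->
  (forall a b, e 0 a b = - e 0 b a) -> forall a, e 0 a (- a) = 0.
Proof.
move=> e_law e0_anti a.
have [->|a_neq0] := eqVneq a 0; first by rewrite oppr0 antisym_diag.
apply: (@mulIintr_eq0 (-2 * a)); first by lia.
apply: (eq0_of_eq (e_law 0 (- a) 0 (- a))); rewrite /wact.
rewrite add0r sub0r !subr0 opprK mulr0 addNr antisym_diag //; ring.
Qed.

(* L_0 acts on L_a /\ L_b as multiplication by -(a + b), so [ad0_inv c] is a
   preimage of [c] under it when [c] has no weight-0 part. *)
Definition ad0_inv (c : int -> int -> F) (a b : int) : F :=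
  if a + b == 0 then 0 else - c a b / (a + b)%:~R.

Lemma wact0_ad0_inv c : (forall a, c a (- a) = 0) ->
  forall a b, wact 0 (ad0_inv c) a b = c a b.
Proof.
move=> c_antidiag a b; rewrite /wact /ad0_inv !subr0.
have [/eqP hab|hab] := eqVneq (a + b) 0.
  by rewrite (_ : b = - a) ?c_antidiag; [ring | lia].
have : ((a + b)%:~R : F) != 0 by rewrite pchar0_intr_eq0.
rewrite !(intrD, intrB, intrM) => hab_neq0; by field.
Qed.

Lemma wedge_elt_ad0_inv c : wedge_elt c -> wedge_elt (ad0_inv c).
Proof.
move=> [c_anti [N cN]]; split.
  move=> a b; rewrite /ad0_inv (addrC b) (c_anti b).
  by case: ifP => _; rewrite ?oppr0 // opprK mulNr.
by exists N => a b hab; rewrite /ad0_inv cN // oppr0 mul0r if_same.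
Qed.

Lemma normalize_deg0 d : witt_cocycle d ->
  exists2 v, wedge_elt v &
    witt_cocycle (sub_coboundary d v) /\ forall a b, sub_coboundary d v 0 a b = 0.
Proof.
move=> d_cocycle; have [d_wedge d_law] := d_cocycle.
have d0_antidiag := @cocycle_law_deg0_antidiag d d_law (d_wedge 0).1.
have v_wedge : wedge_elt (ad0_inv (d 0)) by exact/wedge_elt_ad0_inv.
exists (ad0_inv (d 0)) => //; split; first exact: witt_cocycle_sub.
by move=> a b; rewrite /sub_coboundary wact0_ad0_inv // subrr.
Qed.

Section WeightZeroSolution.
Variable D : int -> F.
Hypothesis D_anti : forall a, D (1 - a) = - D a.

Fixpoint wsol_nat (k : nat) : F :=
  if k is k'.+1 then (D k%:Z - (2 - k%:Z)%:~R * wsol_nat k') / (1 + k%:Z)%:~R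
  else 0.

Definition wsol (a : int) : F :=
  if 0 <= a then wsol_nat (absz a) else - wsol_nat (absz a).

Lemma wsol_odd a : wsol (- a) = - wsol a.
Proof. by case: a => [[|k]|k]; rewrite /wsol /= ?oppr0 ?opprK. Qed.

Lemma wsol_rec a : (2 - a)%:~R * wsol (a - 1) + (1 + a)%:~R * wsol a = D a.
Proof.
case: a => [[|k]|k].
- have two_neq0 : (2%:~R : F) != 0 by rewrite pchar0_intr_eq0.
  rewrite sub0r wsol_odd -[D 0]opprK -D_anti /wsol /= subr0.
  by rewrite -[1 + 1]/2; field.
- have k1_neq0 : ((1 + k.+1%:Z)%:~R : F) != 0 by rewrite pchar0_intr_eq0; lia.
  rewrite (_ : k.+1%:Z - 1 = k%:Z); last by lia.
  by rewrite /wsol /= mulrCA mulfV // mulr1; ring.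
- rewrite (_ : Negz k - 1 = Negz k.+1); last by lia.
  have k2_neq0 : ((1 + k.+2%:Z)%:~R : F) != 0 by rewrite pchar0_intr_eq0; lia.
  rewrite /wsol /= (_ : Negz k = 1 - k.+2%:Z) ?D_anti; last by lia.
  rewrite (_ : 2 - (1 - k.+2%:Z) = 1 + k.+2%:Z); last by lia.
  by rewrite mulrN mulrCA mulfV // mulr1; ring.
Qed.
End WeightZeroSolution.

Definition diag_wedge (W : int -> F) (a b : int) : F :=
  if a + b == 0 then W a else 0.

Lemma wact0_diag_wedge (W : int -> F) a b : wact 0 (diag_wedge W) a b = 0.
Proof.
rewrite /wact !subr0 mulr0 !sub0r -mulrDl -intrD -opprD /diag_wedge.
by case: eqP => [->|_]; rewrite ?oppr0 ?mul0r ?mulr0.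
Qed.

Lemma wact_diag_wedge m (W : int -> F) a :
  wact m (diag_wedge W) a (m - a) = (2 * m - a)%:~R * W (a - m) + (m + a)%:~R * W a.
Proof.
rewrite /wact /diag_wedge.
have -> : a - m + (m - a) = 0 by ring.
have -> : a + (m - a - m) = 0 by ring.
have -> : 2 * m - (m - a) = m + a by ring.
by rewrite eqxx.
Qed.

Lemma wedge_elt_diag_wedge (W : int -> F) : (forall a, W (- a) = - W a) ->
  (exists M : nat, forall a, M%:Z <= a -> W a = 0) -> wedge_elt (diag_wedge W).
Proof.
move=> W_odd [M WM]; split.
  move=> a b; rewrite /diag_wedge addrC; case: eqP => [hab|]; last by rewrite oppr0.
  by rewrite (_ : b = - a) ?W_odd ?opprK //; lia.
have W_large a : (M < absz a)%N -> W a = 0.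
  have [a_ge0|a_lt0] := lerP 0 a; first by move=> ?; apply: WM; lia.
  by move=> ?; rewrite -[a]opprK W_odd WM ?oppr0 //; lia.
exists M => a b hab; rewrite /diag_wedge; case: eqP => // /eqP hab0.
by apply: W_large; lia.
Qed.

(* [L_1, L_n] = (1 - n) L_(n+1) and [L_-1, L_-n] = (n - 1) L_-(n+1). *)
Lemma cocycle_law_eq0 e : cocycle_law e ->
  (forall n, -2 <= n <= 2 -> forall a b, e n a b = 0) -> forall n a b, e n a b = 0.
Proof.
move=> e_law e_small.
have e1 a b : e 1 a b = 0 by apply: e_small.
have eN1 a b : e (-1) a b = 0 by apply: e_small.
have e_pos k a b : e k.+2%:Z a b = 0.
  elim: k a b => [|k IH] a b; first exact: e_small.
  apply: (@mulIintr_eq0 (1 - k.+2%:Z)); first by lia.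
  have -> : k.+3%:Z = 1 + k.+2%:Z by lia.
  by rewrite e_law /wact !IH !e1; ring.
have e_neg k a b : e (- k.+2%:Z) a b = 0.
  elim: k a b => [|k IH] a b; first exact: e_small.
  apply: (@mulIintr_eq0 (-1 - - k.+2%:Z)); first by lia.
  have -> : - k.+3%:Z = -1 + - k.+2%:Z by lia.
  by rewrite e_law /wact !IH !eN1; ring.
move=> n a b; have [n_le2|n_gt2] := lerP n 2.
  have [n_ge|n_lt] := lerP (-2) n; first by apply: e_small; lia.
  by rewrite (_ : n = - (absz n - 2)%N.+2%:Z) ?e_neg //; lia.
by rewrite (_ : n = (absz n - 2)%N.+2%:Z) ?e_pos //; lia.
Qed.

Definition wcoef e (n a : int) : F := e n a (n - a).

Lemma wcoefE e n a b : b = n - a -> e n a b = wcoef e n a.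
Proof. by move->. Qed.

Section NormalizedCocycle.
Variable e : int -> int -> int -> F.
Hypothesis e_law : cocycle_law e.
Hypothesis e0 : forall a b, e 0 a b = 0.
Hypothesis e1 : forall a b, e 1 a b = 0.

Lemma wcoefN1_rec a :
  (2 - a)%:~R * wcoef e (-1) (a - 1) + (2 + a)%:~R * wcoef e (-1) a = 0.
Proof.
apply: (eq0_of_eq (esym (e_law 1 (-1) a (- a)))).
by rewrite subrr e0 /wact !e1 !wcoefE; ring.
Qed.

Lemma wcoefN2_rec a : (2 - a)%:~R * wcoef e (-2) (a - 1)
  + (3 + a)%:~R * wcoef e (-2) a = 3%:~R * wcoef e (-1) a.
Proof.
apply/eqP; rewrite -subr_eq0; apply/eqP.
apply: (eq0_of_eq (esym (e_law 1 (-2) a (-1 - a)))).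
by rewrite /wact !e1 !wcoefE; ring.
Qed.

Lemma wcoef2_rec a : (4 - a)%:~R * wcoef e (-1) (a - 2) + (a + 3)%:~R * wcoef e (-1) a
  + (a + 2)%:~R * wcoef e 2 (a + 1) - (a - 3)%:~R * wcoef e 2 a = 0.
Proof.
apply: (eq0_of_eq (esym (e_law 2 (-1) a (1 - a)))).
by rewrite /wact !e1 !wcoefE; ring.
Qed.

Lemma wcoefN1_ge2 a : 2 <= a -> wcoef e (-1) a = 0.
Proof.
apply: (@recurrence_up _ (fun a => 2 - a) (fun a => 2 + a) 2) => [b _|b|].
- exact: wcoefN1_rec.
- lia.
- by apply: (@mulIintr_eq0 4) => //; apply: (eq0_of_eq (wcoefN1_rec 2)); ring.
Qed.

Lemma wcoefN2_ge2 a : 2 <= a -> wcoef e (-2) a = 0.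
Proof.
apply: (@recurrence_up _ (fun a => 2 - a) (fun a => 3 + a) 2) => [b hb|b|].
- by rewrite wcoefN2_rec wcoefN1_ge2 ?mulr0 //; lia.
- lia.
- apply: (@mulIintr_eq0 5) => //; apply: (eq0_of_eq (wcoefN2_rec 2)).
  by rewrite wcoefN1_ge2 //; ring.
Qed.

Hypothesis e_wedge : forall n, wedge_elt (e n).

Lemma wcoef2_ge4 a : 4 <= a -> wcoef e 2 a = 0.
Proof.
have [_ [N eN]] := e_wedge 2.
move=> a_ge4; apply: (@recurrence_down _ (fun b => 4 - b) (fun b => b + 1) 4 (a + N%:Z + 1)).
- move=> b /andP[hb _]; apply: (eq0_of_eq (wcoef2_rec (b - 1))).
  by rewrite subrK !wcoefN1_ge2; [ring | lia | lia].
- by move=> b /andP[hb _]; lia.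
- by apply: eN; left; lia.
- lia.
Qed.

Lemma wcoefN1_eq0 a : wcoef e (-1) a = 0.
Proof.
apply: (@recurrence_eq0 _ (fun a => 2 - a) (fun a => 2 + a) 1) => [b|b|b|].
- exact: wcoefN1_rec.
- lia.
- lia.
- apply: (eq0_of_eq (wcoef2_rec 3)).
  by rewrite (@wcoefN1_ge2 3) // (@wcoef2_ge4 (3 + 1)) //; ring.
Qed.

Lemma wcoef2_eq0 a : wcoef e 2 a = 0.
Proof.
apply: (@recurrence_eq0 _ (fun b => 4 - b) (fun b => b + 1) 1) => [b|b|b|].
- apply: (eq0_of_eq (wcoef2_rec (b - 1))).
  by rewrite subrK !wcoefN1_eq0; ring.
- lia.
- lia.
- exact: antisym_diag (e_wedge 2).1 1.
Qed.

Lemma wcoefN2_eq0 a : wcoef e (-2) a = 0.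
Proof.
apply: (@recurrence_eq0 _ (fun b => 2 - b) (fun b => 3 + b) (-1)) => [b|b|b|].
- by rewrite wcoefN2_rec wcoefN1_eq0 mulr0.
- lia.
- lia.
- exact: antisym_diag (e_wedge (-2)).1 (-1).
Qed.

Lemma normalized_cocycle_eq0 n a b : e n a b = 0.
Proof.
apply: cocycle_law_eq0 => // {a b} n n_small a b.
have [hab|hab] := eqVneq (a + b) n; last exact: cocycle_law_homogeneous.
rewrite (@wcoefE e n a b); last by lia.
have : n = -2 \/ n = -1 \/ n = 0 \/ n = 1 \/ n = 2 by lia.
case=> [->|[->|[->|[->|->]]]].
- exact: wcoefN2_eq0.
- exact: wcoefN1_eq0.
- exact: e0.
- exact: e1.
- exact: wcoef2_eq0.
Qed.
End NormalizedCocycle.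

Section DegreeOne.
Variable e : int -> int -> int -> F.
Hypothesis e_cocycle : witt_cocycle e.
Hypothesis e0 : forall a b, e 0 a b = 0.

Let W := wsol (wcoef e 1).
Let e' := sub_coboundary e (diag_wedge W).

Lemma wcoef1_anti a : wcoef e 1 (1 - a) = - wcoef e 1 a.
Proof. by rewrite /wcoef (e_cocycle.1 1).1 opprB addrC subrK. Qed.

Lemma sub_diag_wedge_law : cocycle_law e'.
Proof. exact/cocycle_law_sub/e_cocycle.2. Qed.

Lemma sub_diag_wedge0 a b : e' 0 a b = 0.
Proof. by rewrite /e' /sub_coboundary e0 wact0_diag_wedge subrr. Qed.

Lemma sub_diag_wedge1 a b : e' 1 a b = 0.
Proof.
have [hab|hab] := eqVneq (a + b) 1; last first.
  exact: cocycle_law_homogeneous sub_diag_wedge_law sub_diag_wedge0 _ _ _ hab.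
rewrite (@wcoefE e' 1 a b); last by lia.
by rewrite /wcoef /e' /sub_coboundary wact_diag_wedge wsol_rec ?subrr //; exact: wcoef1_anti.
Qed.

(* The three recurrences below are independent for large [a]: eliminating
   [W a] and [W (a + 1)] leaves [-12 * W (a + 2) = 0]. *)
Lemma wsol_eventually0 : exists M : nat, forall a, M%:Z <= a -> W a = 0.
Proof.
have [_ [N1 e1N]] := (e_cocycle.1 1); have [_ [N2 e2N]] := (e_cocycle.1 (-2)).
exists (N1 + N2 + 4)%N => b hb; set a := b - 2.
have W_rec k : N1%:Z < k -> (2 - k)%:~R * W (k - 1) + (1 + k)%:~R * W k = 0.
  move=> hk; rewrite wsol_rec; last exact: wcoef1_anti.
  by apply: e1N; left; lia.
have E1 := W_rec (a + 1); rewrite addrK in E1.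
have E2 := W_rec (a + 2); rewrite (_ : a + 2 - 1 = a + 1) in E2; last by ring.
have E3 := @wcoefN2_ge2 e' sub_diag_wedge_law sub_diag_wedge0 sub_diag_wedge1 a.
rewrite /wcoef /e' /sub_coboundary wact_diag_wedge e2N in E3; last by left; lia.
rewrite (_ : b = a + 2); last by rewrite /a subrK.
apply: (@mulIintr_eq0 (-12)) => //.
apply: (lincomb3_eq0 (a * (a - 2))%:~R ((a - 2) * (a + 2))%:~R (- (a * (a - 1)))%:~R
  (E1 _) (E2 _) (E3 _)); rewrite ?opprK; try lia.
ring.
Qed.

Lemma normalize_deg1 : exists2 w, wedge_elt w &
  [/\ witt_cocycle (sub_coboundary e w), forall a b, sub_coboundary e w 0 a b = 0
    & forall a b, sub_coboundary e w 1 a b = 0].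
Proof.
have W_wedge := @wedge_elt_diag_wedge W (wsol_odd _) wsol_eventually0.
exists (diag_wedge W) => //; split.
- exact: witt_cocycle_sub.
- exact: sub_diag_wedge0.
- exact: sub_diag_wedge1.
Qed.
End DegreeOne.
End WittCocycles.

Theorem theoremP0 (F : fieldType) (charF : [pchar F] =i pred0)
  (d : int -> int -> int -> F) :
  witt_cocycle d -> witt_coboundary d.
Proof.
move=> d_cocycle.
have [v v_wedge [e_cocycle e0]] := normalize_deg0 charF _ d_cocycle.
apply: (witt_coboundary_sub v_wedge).
have [w w_wedge [e'_cocycle e'0 e'1]] := normalize_deg1 charF _ e_cocycle e0.
apply: (witt_coboundary_sub w_wedge); apply: witt_coboundary0.
exact: (normalized_cocycle_eq0 charF _ e'_cocycle.2 e'0 e'1 e'_cocycle.1).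
Qed.
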